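(* Let $P,Q,R\in D_P$ be three points not lying on a common hyperbolic line, and let $m\in\mathbb{Z}_{\ge 0}$ be the number of ideal triangles circumscribing $\triangle PQR$. Let $h$ be the hyperbolic length of the perpendicular geodesic segment from $R$ to the hyperbolic line through $P$ and $Q$. Then $$m=\begin{cases}0 & \text{if } h<\Delta(P,Q),\\ 1 & \text{if } h=\Delta(P,Q),\\ 2 & \text{if } h>\Delta(P,Q).\end{cases}$$
   Context: $D_P=\{z\in\mathbb{C}:|z|<1\}$ is the Poincaré disk with metric $ds^2=4\frac{dx^2+dy^2}{(1-x^2-y^2)^2}$, and $S^1=\{|z|=1\}$ is its boundary at infinity. Hyperbolic lines are arcs of circles or diameters orthogonal to $S^1$. The hyperbolic distance is $d(P,Q)=\operatorname{arccosh}\left(1+\frac{2|P-Q|^2}{(1-|P|^2)(1-|Q|^2)}\right)$, and $\Delta(P,Q):=\log\frac{e^{d(P,Q)}+1}{e^{d(P,Q)}-1}=\log\coth\frac{d(P,Q)}{2}$. An ideal triangle circumscribing $\triangle PQR$ (a ''triangle inscribed in $S^1$ and circumscribing $\triangle PQR$'') is a triangle whose three vertices are distinct points of $S^1$ and whose sides are hyperbolic lines joining them, such that $P$, $Q$, $R$ lie on three distinct sides (one point on each side). *)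

From Stdlib Require Import Reals Lra.
Open Scope R_scope.

Definition pt := (R * R)%type.

Definition dot (u v : pt) : R := fst u * fst v + snd u * snd v.
Definition nrm2 (u : pt) : R := dot u u.
Definition psub (u v : pt) : pt := (fst u - fst v, snd u - snd v).
Definition det2 (u v : pt) : R := fst u * snd v - snd u * fst v.

Definition in_disk (z : pt) : Prop := nrm2 z < 1.
Definition on_S1 (z : pt) : Prop := nrm2 z = 1.

Definition arccosh (x : R) : R := ln (x + sqrt (x * x - 1)).

Definition hdist (P Q : pt) : R :=
  arccosh (1 + 2 * nrm2 (psub P Q) / ((1 - nrm2 P) * (1 - nrm2 Q))).

Definition hDelta (P Q : pt) : R :=
  ln ((exp (hdist P Q) + 1) / (exp (hdist P Q) - 1)).

(* Hyperbolic lines: either (the part inside D_P of) a Euclidean circle with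
   centre c and radius r orthogonal to S^1, or a diameter, i.e. the part
   inside D_P of a Euclidean line through the origin with direction w. *)
Inductive hline : Type :=
| HCirc (c : pt) (r : R)
| HDiam (w : pt).

Definition hl_ok (L : hline) : Prop :=
  match L with
  | HCirc c r => 0 < r /\ nrm2 c = 1 + r * r   (* orthogonal to S^1 *)
  | HDiam w => w <> (0, 0)
  end.

Definition hl_eq (L : hline) (z : pt) : Prop :=
  match L with
  | HCirc c r => nrm2 (psub z c) = r * r
  | HDiam w => det2 w z = 0
  end.

Definition on_hl (L : hline) (z : pt) : Prop := in_disk z /\ hl_eq L z.

Definition hl_end (L : hline) (u : pt) : Prop := on_S1 u /\ hl_eq L u.

Definition hl_normal (L : hline) (z : pt) : pt :=
  match L with
  | HCirc c _ => psub z c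
  | HDiam w => (- snd w, fst w)
  end.

(* L1 and L2 meet perpendicularly at z (the Poincare metric is conformal,
   so hyperbolic angles equal Euclidean angles). *)
Definition orth_at (L1 L2 : hline) (z : pt) : Prop :=
  on_hl L1 z /\ on_hl L2 z /\ dot (hl_normal L1 z) (hl_normal L2 z) = 0.

Definition on_side (u v z : pt) : Prop :=
  exists L, hl_ok L /\ hl_end L u /\ hl_end L v /\ on_hl L z.

(* The set of ideal triangles circumscribing triangle PQR; an ideal triangle
   is identified with its set of three (distinct, ideal) vertices. *)
Definition circumscribing (P Q R0 : pt) (T : pt -> Prop) : Prop :=
  exists a b c : pt,
    on_S1 a /\ on_S1 b /\ on_S1 c /\ a <> b /\ b <> c /\ c <> a /\
    T = (fun z => z = a \/ z = b \/ z = c) /\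
    on_side b c P /\ on_side c a Q /\ on_side a b R0.

Definition has_card {T : Type} (A : T -> Prop) (n : nat) : Prop :=
  exists f : nat -> T,
    (forall i j, (i < n)%nat -> (j < n)%nat -> f i = f j -> i = j) /\
    (forall x, A x <-> exists i, (i < n)%nat /\ f i = x).

From Stdlib Require Import Reals Lra Psatz FunctionalExtensionality PropExtensionality.
Open Scope R_scope.

(* A Moebius map of the disk followed by a rotation sends the foot F to 0,
   the line PQ to the real diameter and the perpendicular through R to the
   imaginary one, so that P = (p,0), Q = (q,0), R = (0,s).  Such maps
   preserve hyperbolic distances and map ideal triangles circumscribing PQR
   bijectively onto those circumscribing the image, so it suffices to count
   in this position.  There a circumscribing triangle is determined by its
   vertex c opposite R: the sides through P and Q end at the points with
   half-angle parameters -m(q)/tau and -m(p)/tau, where tau is that of c and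
   m(t) = ((1-t)/(1+t))^2.  R lies on the third side iff tau is a root of a
   quadratic whose discriminant has the sign of
   (1+|s|)/(1-|s|) - (1-pq)/|p-q|, i.e. of h - Delta(P,Q), and distinct
   roots give distinct triangles. *)

Lemma pt_eq (u v : pt) : fst u = fst v -> snd u = snd v -> u = v.
Proof. destruct u, v; simpl; intros; subst; reflexivity. Qed.

Lemma pt_eq_or_neq (u v : pt) : u = v \/ u <> v.
Proof.
  destruct (Req_dec (fst u) (fst v)); [|right; intro E; subst; auto].
  destruct (Req_dec (snd u) (snd v)); [|right; intro E; subst; auto].
  left. apply pt_eq; auto.
Qed.

Lemma sum_sq_le0 a b : a * a + b * b <= 0 -> a = 0 /\ b = 0.
Proof. intro H. split; nra. Qed.

(* Proving an identity modulo one or two polynomial equations: [lra] sees the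
   hypotheses only linearly, so the multipliers are supplied by hand. *)
Lemma eq_by_combination1 (a b x y k : R) : x = y -> a - b = k * (x - y) -> a = b.
Proof. intros H1 H2. rewrite H1 in H2. lra. Qed.

Lemma eq_by_combination2 (a b x y x' y' k k' : R) : x = y -> x' = y' ->
  a - b = k * (x - y) + k' * (x' - y') -> a = b.
Proof. intros H1 H2 H3. rewrite H1, H2 in H3. lra. Qed.

Lemma one_plus_sq_neq0 a : 1 + a * a <> 0.
Proof. nra. Qed.

Definition rot90 (u : pt) : pt := (- snd u, fst u).

(* Generalized circles [A (|z|^2 + 1) = 2 c.z]: circles orthogonal to S^1
   for [A <> 0], lines through the origin for [A = 0]. *)
Definition gcirc (A : R) (c z : pt) : Prop := A * (nrm2 z + 1) = 2 * dot c z.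
Definition gcirc_nondeg (A : R) (c : pt) : Prop := A * A < nrm2 c.

Definition hl_A (L : hline) : R := match L with HCirc _ _ => 1 | HDiam _ => 0 end.
Definition hl_c (L : hline) : pt := match L with HCirc c _ => c | HDiam w => rot90 w end.

Lemma hl_gcirc L : hl_ok L ->
  gcirc_nondeg (hl_A L) (hl_c L) /\ forall z, hl_eq L z <-> gcirc (hl_A L) (hl_c L) z.
Proof.
  destruct L as [c r | [w1 w2]]; simpl;
    unfold gcirc_nondeg, gcirc, nrm2, dot, psub, det2, rot90; simpl.
  - intros [Hr Hc]. split; [nra|]. intro z. split; intro; nra.
  - intro Hw. split; [|intro z; split; intro; lra].
    destruct (Req_dec w1 0), (Req_dec w2 0); subst; try (exfalso; apply Hw; reflexivity); nra.
Qed.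

Lemma gcirc_hl A c : gcirc_nondeg A c ->
  exists L, hl_ok L /\ forall z, hl_eq L z <-> gcirc A c z.
Proof.
  unfold gcirc_nondeg, gcirc, nrm2, dot. intro Hn.
  destruct (Req_dec A 0) as [HA|HA].
  - exists (HDiam (- snd c, fst c)). simpl. split.
    + intro E. injection E; intros. destruct c; simpl in *. subst. nra.
    + intro z. unfold det2; simpl. split; intro; nra.
  - set (c' := (fst c / A, snd c / A)).
    assert (Hc' : nrm2 c' - 1 > 0).
    { unfold c', nrm2, dot; simpl.
      replace (fst c / A * (fst c / A) + snd c / A * (snd c / A) - 1)
        with ((fst c * fst c + snd c * snd c - A * A) / (A * A)) by (field; auto).
      apply Rdiv_lt_0_compat; nra. }
    set (r := sqrt (nrm2 c' - 1)).
    assert (Hr : r * r = nrm2 c' - 1) by (apply sqrt_sqrt; lra).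
    exists (HCirc c' r). simpl. split; [split; [apply sqrt_lt_R0; lra | lra]|].
    intro z.
    assert (Hd : dot c z = A * dot c' z) by (unfold dot, c'; simpl; field; auto).
    assert (Hn2 : nrm2 (psub z c') = nrm2 z - 2 * dot c' z + nrm2 c')
      by (unfold nrm2, dot, psub; simpl; ring).
    change (nrm2 (psub z c') = r * r <-> A * (nrm2 z + 1) = 2 * dot c z).
    rewrite Hn2, Hr, Hd. split; intro H.
    + replace (nrm2 z + 1) with (2 * dot c' z) by lra. ring.
    + enough (nrm2 z + 1 = 2 * dot c' z) by lra.
      apply (Rmult_eq_reg_l A); auto. lra.
Qed.

(* The Euclidean normal of a generalized circle at z, up to a nonzero factor. *)
Definition gcirc_normal (A : R) (c z : pt) : pt := (A * fst z - fst c, A * snd z - snd c).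

Lemma hl_normal_gcirc L1 L2 z :
  dot (hl_normal L1 z) (hl_normal L2 z) = 0 <->
  dot (gcirc_normal (hl_A L1) (hl_c L1) z) (gcirc_normal (hl_A L2) (hl_c L2) z) = 0.
Proof. destruct L1, L2; unfold dot, gcirc_normal, hl_normal, psub, rot90; simpl; split; intro; lra. Qed.

Lemma S1_dot_det (u v : pt) : on_S1 u -> on_S1 v ->
  dot u v * dot u v + det2 u v * det2 u v = 1.
Proof.
  unfold on_S1, nrm2, dot, det2. destruct u as [u1 u2], v as [v1 v2]; simpl.
  intros Hu Hv. replace 1 with (1 * 1) by ring. rewrite <- Hu at 1. rewrite <- Hv. ring.
Qed.

Lemma S1_dot1_eq u v : on_S1 u -> on_S1 v -> dot u v = 1 -> u = v.
Proof.
  unfold on_S1, nrm2, dot. destruct u as [u1 u2], v as [v1 v2]; simpl. intros.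
  destruct (sum_sq_le0 (u1 - v1) (u2 - v2)); [nra | apply pt_eq; simpl; lra].
Qed.

Lemma S1_det0_antipodal (u v : pt) : on_S1 u -> on_S1 v -> u <> v -> det2 u v = 0 ->
  v = (- fst u, - snd u).
Proof.
  intros Hu Hv Hne Hd. pose proof (S1_dot_det u v Hu Hv) as Hdd. rewrite Hd in Hdd.
  assert (Hdot : dot u v <> 1) by (intro E; apply Hne, S1_dot1_eq; auto).
  assert (Hdot' : dot u v = -1) by nra.
  unfold on_S1, nrm2, dot in *. destruct u as [u1 u2], v as [v1 v2]; simpl in *.
  destruct (sum_sq_le0 (u1 + v1) (u2 + v2)); [nra | apply pt_eq; simpl; lra].
Qed.

Definition ideal_line (u v z : pt) : Prop := gcirc (det2 u v) (rot90 (psub u v)) z.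

Lemma ideal_line_l u v : on_S1 u -> ideal_line u v u.
Proof. unfold ideal_line, gcirc, on_S1, nrm2, dot, det2, rot90, psub; simpl. intro H. rewrite H. ring. Qed.

Lemma ideal_line_r u v : on_S1 v -> ideal_line u v v.
Proof. unfold ideal_line, gcirc, on_S1, nrm2, dot, det2, rot90, psub; simpl. intro H. rewrite H. ring. Qed.

Lemma ideal_line_sym u v z : ideal_line u v z <-> ideal_line v u z.
Proof. unfold ideal_line, gcirc, nrm2, dot, det2, rot90, psub; simpl. split; intro; lra. Qed.

Lemma ideal_line_nondeg u v : on_S1 u -> on_S1 v -> u <> v ->
  gcirc_nondeg (det2 u v) (rot90 (psub u v)).
Proof.
  intros Hu Hv Hne. pose proof (S1_dot_det u v Hu Hv) as H.
  assert (Hd : dot u v <> 1) by (intro E; apply Hne, S1_dot1_eq; auto).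
  assert (E : nrm2 (rot90 (psub u v)) = 2 - 2 * dot u v)
    by (unfold on_S1, nrm2, dot, rot90, psub in *; simpl; lra).
  unfold gcirc_nondeg. rewrite E.
  assert (0 < (1 - dot u v) * (1 - dot u v)) by (assert (1 - dot u v <> 0) by lra; nra).
  nra.
Qed.

Lemma gcirc_ideal_line A c u v : gcirc_nondeg A c -> on_S1 u -> on_S1 v -> u <> v ->
  gcirc A c u -> gcirc A c v -> forall z, gcirc A c z <-> ideal_line u v z.
Proof.
  intros Hn Hu Hv Hne Gu Gv z.
  assert (Cu : dot c u = A) by (unfold gcirc in Gu; rewrite Hu in Gu; lra).
  assert (Cv : dot c v = A) by (unfold gcirc in Gv; rewrite Hv in Gv; lra).
  destruct (Req_dec (det2 u v) 0) as [Hd|Hd].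
  - pose proof (S1_det0_antipodal u v Hu Hv Hne Hd) as Ev. subst v.
    unfold ideal_line, gcirc, gcirc_nondeg, on_S1, nrm2, dot, det2, psub, rot90 in *.
    destruct u as [u1 u2], c as [c1 c2], z as [z1 z2]; simpl in *.
    assert (HA : A = 0) by lra. rewrite HA in Cu, Hn |- *.
    (* then c is a nonzero multiple of [rot90 u] *)
    set (lam := - c1 * u2 + c2 * u1).
    assert (E1 : c1 = lam * (- u2)) by (apply (eq_by_combination2 _ _ _ _ _ _ u1 (-c1) Cu Hu); unfold lam; ring).
    assert (E2 : c2 = lam * u1) by (apply (eq_by_combination2 _ _ _ _ _ _ u2 (-c2) Cu Hu); unfold lam; ring).
    assert (Hl : lam <> 0) by (intro Hl; rewrite Hl in E1, E2; rewrite E1, E2 in Hn; lra).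
    rewrite E1, E2. split; intro H.
    + assert (lam * (- u2 * z1 + u1 * z2) = 0) by lra.
      destruct (Rmult_integral _ _ H0); [contradiction | nra].
    + nra.
  - assert (HJ1 : det2 u v * fst c = A * fst (rot90 (psub u v))).
    { unfold dot, det2, rot90, psub in *. destruct u as [u1 u2], v as [v1 v2], c as [c1 c2]; simpl in *.
      apply (eq_by_combination2 _ _ _ _ _ _ v2 (-u2) Cu Cv). ring. }
    assert (HJ2 : det2 u v * snd c = A * snd (rot90 (psub u v))).
    { unfold dot, det2, rot90, psub in *. destruct u as [u1 u2], v as [v1 v2], c as [c1 c2]; simpl in *.
      apply (eq_by_combination2 _ _ _ _ _ _ (-v1) u1 Cu Cv). ring. }
    assert (HA : A <> 0).
    { intro HA. rewrite HA, Rmult_0_l in HJ1, HJ2. unfold gcirc_nondeg, nrm2, dot in Hn.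
      apply Rmult_integral in HJ1, HJ2. rewrite HA in Hn.
      destruct HJ1, HJ2; try contradiction. nra. }
    assert (Key : det2 u v * dot c z = A * dot (rot90 (psub u v)) z).
    { unfold dot at 1 2.
      replace (det2 u v * (fst c * fst z + snd c * snd z)) with
        ((det2 u v * fst c) * fst z + (det2 u v * snd c) * snd z) by ring.
      rewrite HJ1, HJ2. ring. }
    unfold ideal_line, gcirc. split; intro H.
    + apply (Rmult_eq_reg_l A); auto.
      transitivity (det2 u v * (A * (nrm2 z + 1))); [ring|]. rewrite H. lra.
    + apply (Rmult_eq_reg_l (det2 u v)); auto.
      transitivity (A * (det2 u v * (nrm2 z + 1))); [ring|]. rewrite H. lra.
Qed.

Lemma on_side_ideal_line u v z : on_S1 u -> on_S1 v -> u <> v ->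
  (on_side u v z <-> in_disk z /\ ideal_line u v z).
Proof.
  intros Hu Hv Hne. split.
  - intros [L [HL [[_ Eu] [[_ Ev] [Hz Ez]]]]].
    destruct (hl_gcirc L HL) as [Hn Heq]. split; auto.
    apply (gcirc_ideal_line (hl_A L) (hl_c L) u v Hn Hu Hv Hne); apply Heq; auto.
  - intros [Hz G].
    destruct (gcirc_hl _ _ (ideal_line_nondeg u v Hu Hv Hne)) as [L [HL Heq]].
    exists L. split; auto.
    split; [split; auto; apply Heq, ideal_line_l; auto|].
    split; [split; auto; apply Heq, ideal_line_r; auto|].
    split; auto. apply Heq; auto.
Qed.

Definition circ_ideal (P Q R0 : pt) (X : pt -> Prop) : Prop :=
  exists a b c : pt,
    on_S1 a /\ on_S1 b /\ on_S1 c /\ a <> b /\ b <> c /\ c <> a /\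
    X = (fun z => z = a \/ z = b \/ z = c) /\
    ideal_line b c P /\ ideal_line c a Q /\ ideal_line a b R0.

Lemma circumscribing_ideal P Q R0 X : in_disk P -> in_disk Q -> in_disk R0 ->
  (circumscribing P Q R0 X <-> circ_ideal P Q R0 X).
Proof.
  intros HP HQ HR.
  split; intros [a [b [c [Ha [Hb [Hc [Hab [Hbc [Hca [HX [S1 [S2 S3]]]]]]]]]]]];
    exists a, b, c; repeat split; auto;
    solve [ apply (on_side_ideal_line b c P); auto
          | apply (on_side_ideal_line c a Q); auto
          | apply (on_side_ideal_line a b R0); auto ].
Qed.

(* The geodesic from the ideal point u through w leaves the disk at
   [other_end w u]: the second intersection of S^1 with the line through u
   of direction [chord_dir w u]. *)
Definition chord_dir (w u : pt) : pt :=
  ((1 + nrm2 w) * fst u - 2 * fst w, (1 + nrm2 w) * snd u - 2 * snd w).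
Definition chord_len (w u : pt) : R := 2 * (1 + nrm2 w - 2 * dot u w) / nrm2 (chord_dir w u).
Definition other_end (w u : pt) : pt :=
  (fst u - chord_len w u * fst (chord_dir w u), snd u - chord_len w u * snd (chord_dir w u)).

Lemma chord_dir_pos w u : in_disk w -> on_S1 u -> 0 < nrm2 (chord_dir w u).
Proof.
  unfold in_disk, on_S1, chord_dir, nrm2, dot. destruct w as [w1 w2], u as [u1 u2]; simpl.
  intros Hw Hu. set (k := 1 + (w1 * w1 + w2 * w2)).
  destruct (Rle_lt_dec ((k * u1 - 2 * w1) * (k * u1 - 2 * w1) +
                        (k * u2 - 2 * w2) * (k * u2 - 2 * w2)) 0) as [H|H]; auto.
  exfalso. apply sum_sq_le0 in H. destruct H as [E1 E2].
  assert (E : k * k * (u1 * u1 + u2 * u2) = 4 * (w1 * w1 + w2 * w2)).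
  { replace (k * k * (u1 * u1 + u2 * u2)) with ((k * u1) * (k * u1) + (k * u2) * (k * u2)) by ring.
    replace (k * u1) with (2 * w1) by lra. replace (k * u2) with (2 * w2) by lra. ring. }
  rewrite Hu in E. unfold k in E. nra.
Qed.

Lemma chord_len_eq w u : in_disk w -> on_S1 u ->
  chord_len w u * nrm2 (chord_dir w u) = 2 * dot u (chord_dir w u).
Proof.
  intros Hw Hu. pose proof (chord_dir_pos w u Hw Hu).
  replace (dot u (chord_dir w u)) with (1 + nrm2 w - 2 * dot u w).
  - unfold chord_len. field. lra.
  - symmetry. apply (eq_by_combination1 _ _ _ _ (1 + nrm2 w) Hu).
    unfold chord_dir, nrm2, dot; simpl. ring.
Qed.

Lemma ideal_line_other_end w u : ideal_line u (other_end w u) w.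
Proof. unfold ideal_line, gcirc, other_end, chord_dir, det2, rot90, psub, nrm2, dot; simpl. ring. Qed.

Lemma other_end_unique w u v : in_disk w -> on_S1 u -> on_S1 v -> u <> v ->
  ideal_line u v w -> v = other_end w u.
Proof.
  intros Hw Hu Hv Hne G.
  pose proof (chord_dir_pos w u Hw Hu) as Ht.
  pose proof (chord_len_eq w u Hw Hu) as Hm.
  set (t := chord_dir w u) in *. set (x := psub v u). set (n := nrm2 t) in *.
  assert (Hdet : det2 t x = 0).
  { unfold ideal_line, gcirc in G. unfold t, x, chord_dir, det2, psub, rot90, nrm2, dot in *.
    simpl in *. lra. }
  (* x is parallel to t; write x = lam t *)
  set (lam := dot t x / n).
  assert (Ex1 : fst x = lam * fst t).
  { unfold lam. apply (Rmult_eq_reg_l n); [|lra].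
    replace (n * fst x) with (dot t x * fst t - snd t * det2 t x) by (unfold n, nrm2, dot, det2; ring).
    rewrite Hdet. field. lra. }
  assert (Ex2 : snd x = lam * snd t).
  { unfold lam. apply (Rmult_eq_reg_l n); [|lra].
    replace (n * snd x) with (dot t x * snd t + fst t * det2 t x) by (unfold n, nrm2, dot, det2; ring).
    rewrite Hdet. field. lra. }
  assert (Ev : v = (fst u + fst x, snd u + snd x)) by (unfold x, psub; apply pt_eq; simpl; ring).
  assert (Hq : lam * (2 * dot u t + lam * n) = 0).
  { unfold on_S1 in Hu, Hv. rewrite Ev in Hv.
    replace (lam * (2 * dot u t + lam * n)) with (nrm2 (fst u + fst x, snd u + snd x) - nrm2 u).
    - rewrite Hu, Hv; ring.
    - unfold n, nrm2, dot. cbn [fst snd]. rewrite Ex1, Ex2. ring. }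
  assert (Hl : lam <> 0) by (intro Hl; apply Hne; rewrite Ev, Ex1, Ex2, Hl; apply pt_eq; simpl; ring).
  assert (Hl3 : lam = - chord_len w u).
  { apply (Rmult_eq_reg_r n); [|lra].
    destruct (Rmult_integral _ _ Hq); [contradiction | lra]. }
  rewrite Ev. unfold other_end. fold t. apply pt_eq; cbn [fst snd]; rewrite ?Ex1, ?Ex2, Hl3; ring.
Qed.

(* Rational parametrization of S^1 minus (-1,0); the parameter of z is
   [snd z / (1 + fst z)], i.e. tan of half the argument. *)
Definition circ_param (a : R) : pt := ((1 - a * a) / (1 + a * a), 2 * a / (1 + a * a)).

Lemma circ_param_S1 a : on_S1 (circ_param a).
Proof. unfold on_S1, circ_param, nrm2, dot; simpl. pose proof (one_plus_sq_neq0 a). field. auto. Qed.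

Lemma circ_param_inj a b : circ_param a = circ_param b -> a = b.
Proof.
  assert (Hinv : forall a, snd (circ_param a) / (1 + fst (circ_param a)) = a).
  { intro x. unfold circ_param; simpl. pose proof (one_plus_sq_neq0 x).
    field. split; auto. replace (1 + x * x + (1 - x * x)) with 2 by ring. lra. }
  intro E. rewrite <- (Hinv a), <- (Hinv b), E. reflexivity.
Qed.

Lemma S1_circ_param c : on_S1 c -> c <> (-1, 0) -> c = circ_param (snd c / (1 + fst c)).
Proof.
  intros Hc Hne. unfold on_S1, nrm2, dot in Hc. destruct c as [c1 c2]; simpl in *.
  assert (H1 : 1 + c1 <> 0).
  { intro E. apply Hne. assert (c1 = -1) by lra. subst.
    assert (c2 = 0) by nra. subst. reflexivity. }
  set (a := c2 / (1 + c1)).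
  assert (Ha : a * a * (1 + c1) = 1 - c1).
  { unfold a. replace (c2 / (1 + c1) * (c2 / (1 + c1)) * (1 + c1)) with (c2 * c2 / (1 + c1))
      by (field; auto).
    replace (c2 * c2) with ((1 - c1) * (1 + c1)) by lra. field. auto. }
  assert (Hk : (1 + a * a) * (1 + c1) = 2) by lra.
  pose proof (one_plus_sq_neq0 a).
  unfold circ_param. apply pt_eq; simpl.
  - apply (Rmult_eq_reg_r (1 + a * a)); [|auto]. unfold Rdiv.
    rewrite Rmult_assoc, Rinv_l; auto. nra.
  - apply (Rmult_eq_reg_r (1 + a * a)); [|auto]. unfold Rdiv.
    rewrite Rmult_assoc, Rinv_l, Rmult_1_r; auto.
    apply (Rmult_eq_reg_r (1 + c1)); [|auto].
    replace (c2 * (1 + a * a) * (1 + c1)) with (2 * c2) by (rewrite Rmult_assoc, Hk; ring).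
    unfold a. field. auto.
Qed.

(* Seen in the parameter, [other_end (t,0)] is the involution a |-> -m/a. *)
Definition chord_factor (t : R) : R := ((1 - t) / (1 + t)) * ((1 - t) / (1 + t)).

Lemma chord_factor_pos t : -1 < t < 1 -> 0 < chord_factor t.
Proof.
  intro. unfold chord_factor.
  assert (0 < (1 - t) / (1 + t)) by (apply Rdiv_lt_0_compat; lra). nra.
Qed.

Lemma chord_factor_inj p q : -1 < p < 1 -> -1 < q < 1 -> chord_factor p = chord_factor q -> p = q.
Proof.
  intros Hp Hq E. unfold chord_factor in E.
  assert (0 < (1 - p) / (1 + p)) by (apply Rdiv_lt_0_compat; lra).
  assert (0 < (1 - q) / (1 + q)) by (apply Rdiv_lt_0_compat; lra).
  assert (E2 : (1 - p) / (1 + p) = (1 - q) / (1 + q)) by nra.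
  apply (Rmult_eq_compat_l ((1 + p) * (1 + q))) in E2.
  field_simplify in E2; lra.
Qed.

Lemma other_end_circ_param t a : -1 < t < 1 -> a <> 0 ->
  other_end (t, 0) (circ_param a) = circ_param (- chord_factor t / a).
Proof.
  intros Ht Ha.
  assert (Hsq : forall x y, y <> 0 -> x * x + y * y <> 0) by (intros; nra).
  assert (Hsc : (1 + t) * (1 + t) * a * ((1 + t) * (1 + t) * a) +
                - ((1 - t) * (1 - t)) * - ((1 - t) * (1 - t)) <> 0 /\
                ((1 + t * t) * (1 - a * a) - 2 * t * (1 + a * a)) *
                ((1 + t * t) * (1 - a * a) - 2 * t * (1 + a * a)) +
                (1 + t * t) * (2 * a) * ((1 + t * t) * (2 * a)) <> 0).
  { split.
    - rewrite Rplus_comm. apply Hsq. apply Rmult_integral_contrapositive_currified; [nra | auto].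
    - apply Hsq. apply Rmult_integral_contrapositive_currified; [nra | lra]. }
  pose proof (one_plus_sq_neq0 a).
  unfold other_end, chord_len, chord_dir, circ_param, chord_factor, nrm2, dot in *. simpl in *.
  apply pt_eq; simpl; field; repeat split; tauto || lra.
Qed.

Lemma other_end_m1 t : -1 < t < 1 -> other_end (t, 0) (-1, 0) = (1, 0).
Proof.
  intros Ht. unfold other_end, chord_len, chord_dir, nrm2, dot; simpl.
  assert ((1 + t) * (1 + t) <> 0) by nra.
  apply pt_eq; simpl; field; nra.
Qed.

Lemma other_end_p1 t : -1 < t < 1 -> other_end (t, 0) (1, 0) = (-1, 0).
Proof.
  intros Ht. unfold other_end, chord_len, chord_dir, nrm2, dot; simpl.
  apply pt_eq; simpl; field; nra.
Qed.

Lemma ideal_line_param_imag al be s :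
  ideal_line (circ_param al) (circ_param be) (0, s) <->
  (be - al) * ((1 + s * s) * (1 + al * be) - 2 * s * (al + be)) = 0.
Proof.
  pose proof (one_plus_sq_neq0 al). pose proof (one_plus_sq_neq0 be).
  assert (Hk : (1 + al * al) * (1 + be * be) <> 0) by (apply Rmult_integral_contrapositive_currified; auto).
  assert (E : det2 (circ_param al) (circ_param be) * (nrm2 (0, s) + 1) -
              2 * dot (rot90 (psub (circ_param al) (circ_param be))) (0, s) =
              2 * ((be - al) * ((1 + s * s) * (1 + al * be) - 2 * s * (al + be))) /
              ((1 + al * al) * (1 + be * be))).
  { unfold det2, circ_param, rot90, psub, nrm2, dot; simpl. field. auto. }
  unfold ideal_line, gcirc. split; intro HH.
  - assert (H1 : 2 * ((be - al) * ((1 + s * s) * (1 + al * be) - 2 * s * (al + be))) /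
                 ((1 + al * al) * (1 + be * be)) = 0) by lra.
    unfold Rdiv in H1. apply Rmult_integral in H1. destruct H1 as [H1|H1]; [lra|].
    exfalso. revert H1. apply Rinv_neq_0_compat; auto.
  - rewrite HH in E. unfold Rdiv in E. rewrite Rmult_0_r, Rmult_0_l in E. lra.
Qed.

Lemma in_disk_real p : in_disk (p, 0) <-> -1 < p < 1.
Proof. unfold in_disk, nrm2, dot; simpl. split; intro; [split|]; nra. Qed.

Lemma in_disk_imag s : in_disk (0, s) <-> -1 < s < 1.
Proof. unfold in_disk, nrm2, dot; simpl. split; intro; [split|]; nra. Qed.

(* [param_triangle p q tau] is the triangle whose vertex opposite R = (0,s)
   has parameter tau; R lies on its third side iff [vertex_poly p q s tau = 0]. *)
Definition vertex_poly (p q s tau : R) : R :=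
  (1 + s * s) * tau * tau + 2 * s * (chord_factor p + chord_factor q) * tau
  + (1 + s * s) * chord_factor p * chord_factor q.

Definition param_triangle (p q tau : R) : pt -> Prop :=
  fun z => z = circ_param (- chord_factor q / tau) \/ z = circ_param (- chord_factor p / tau)
           \/ z = circ_param tau.

Lemma vertex_poly_root_neq0 p q s tau : -1 < p < 1 -> -1 < q < 1 ->
  vertex_poly p q s tau = 0 -> tau <> 0.
Proof.
  intros Hp Hq G E. subst. unfold vertex_poly in G.
  pose proof (chord_factor_pos p Hp). pose proof (chord_factor_pos q Hq).
  assert (0 < (1 + s * s) * chord_factor p * chord_factor q)
    by (apply Rmult_lt_0_compat; [apply Rmult_lt_0_compat; nra | auto]).
  lra.
Qed.

Lemma vertex_poly_factor p q s tau : tau <> 0 ->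
  vertex_poly p q s tau = tau * tau *
   ((1 + s * s) * (1 + (- chord_factor q / tau) * (- chord_factor p / tau))
    - 2 * s * ((- chord_factor q / tau) + (- chord_factor p / tau))).
Proof. intro. unfold vertex_poly. field. auto. Qed.

Lemma chord_param_neq p q tau : -1 < p < 1 -> -1 < q < 1 -> p <> q -> tau <> 0 ->
  - chord_factor p / tau <> - chord_factor q / tau.
Proof.
  intros Hp Hq Hpq Ht E. apply Hpq, chord_factor_inj; auto.
  apply (Rmult_eq_reg_r (- / tau)); [unfold Rdiv in E; lra|].
  apply Ropp_neq_0_compat, Rinv_neq_0_compat; auto.
Qed.

Lemma circ_ideal_normal_root p q s X : -1 < p < 1 -> -1 < q < 1 -> p <> q ->
  circ_ideal (p, 0) (q, 0) (0, s) X ->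
  exists tau, vertex_poly p q s tau = 0 /\ X = param_triangle p q tau.
Proof.
  intros Hp Hq Hpq [a [b [c [Ha [Hb [Hc [Hab [Hbc [Hca [HX [G1 [G2 G3]]]]]]]]]]]].
  assert (DP : in_disk (p, 0)) by (apply in_disk_real; auto).
  assert (DQ : in_disk (q, 0)) by (apply in_disk_real; auto).
  assert (Eb : b = other_end (p, 0) c) by (apply other_end_unique; auto; apply ideal_line_sym; auto).
  assert (Ea : a = other_end (q, 0) c) by (apply other_end_unique; auto).
  destruct (pt_eq_or_neq c (-1, 0)) as [Ec|Ec].
  { exfalso. apply Hab. rewrite Ea, Eb, Ec, !other_end_m1; auto. }
  set (tau := snd c / (1 + fst c)).
  assert (Ect : c = circ_param tau) by (apply S1_circ_param; auto).
  destruct (Req_dec tau 0) as [T0|T0].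
  { exfalso. apply Hab. rewrite Ea, Eb, Ect, T0.
    replace (circ_param 0) with (1, 0) by (unfold circ_param; apply pt_eq; simpl; field).
    rewrite !other_end_p1; auto. }
  rewrite Ect, other_end_circ_param in Ea, Eb by auto.
  exists tau. split.
  - rewrite Ea, Eb in G3. apply ideal_line_param_imag, Rmult_integral in G3.
    destruct G3 as [G3|G3].
    + exfalso. apply (chord_param_neq p q tau); auto. lra.
    + rewrite vertex_poly_factor, G3 by auto. ring.
  - rewrite HX. unfold param_triangle. rewrite <- Ea, <- Eb, <- Ect. reflexivity.
Qed.

Lemma root_circ_ideal_normal p q s tau : -1 < p < 1 -> -1 < q < 1 -> p <> q ->
  vertex_poly p q s tau = 0 -> circ_ideal (p, 0) (q, 0) (0, s) (param_triangle p q tau).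
Proof.
  intros Hp Hq Hpq G.
  pose proof (vertex_poly_root_neq0 p q s tau Hp Hq G) as T0.
  assert (Hm : forall m, 0 < m -> tau <> - m / tau).
  { intros m Hm E. assert (tau * tau = - m) by (rewrite E at 1; field; auto). nra. }
  exists (circ_param (- chord_factor q / tau)), (circ_param (- chord_factor p / tau)),
    (circ_param tau).
  repeat split; try apply circ_param_S1.
  - intro E. apply circ_param_inj in E. apply (chord_param_neq p q tau); auto.
  - intro E. apply circ_param_inj in E. apply (Hm (chord_factor p)); auto using chord_factor_pos.
  - intro E. apply circ_param_inj in E. apply (Hm (chord_factor q)); auto using chord_factor_pos.
  - rewrite <- other_end_circ_param by auto. apply ideal_line_sym, ideal_line_other_end.
  - rewrite <- other_end_circ_param by auto. apply ideal_line_other_end.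
  - apply ideal_line_param_imag. rewrite vertex_poly_factor in G by auto.
    apply Rmult_integral in G. destruct G as [G|G].
    + exfalso. apply Rmult_integral in G. destruct G; auto.
    + rewrite G. ring.
Qed.

Lemma param_triangle_inj_roots p q s t1 t2 : -1 < p < 1 -> -1 < q < 1 ->
  vertex_poly p q s t1 = 0 -> vertex_poly p q s t2 = 0 ->
  param_triangle p q t1 = param_triangle p q t2 -> t1 = t2.
Proof.
  intros Hp Hq G1 G2 E.
  destruct (Req_dec t1 t2) as [|Hne]; auto. exfalso.
  pose proof (vertex_poly_root_neq0 _ _ _ _ Hp Hq G1) as N1.
  pose proof (chord_factor_pos p Hp) as Mp. pose proof (chord_factor_pos q Hq) as Mq.
  pose proof (one_plus_sq_neq0 s) as Hk.
  (* Vieta: two distinct roots have product [chord_factor p * chord_factor q] *)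
  assert (Hsum : (1 + s * s) * (t1 + t2) = - (2 * s * (chord_factor p + chord_factor q))).
  { assert (H : (t1 - t2) * ((1 + s * s) * (t1 + t2) + 2 * s * (chord_factor p + chord_factor q)) = 0).
    { unfold vertex_poly in G1, G2. rewrite <- (Rminus_diag_eq _ _ (eq_trans G1 (eq_sym G2))). ring. }
    apply Rmult_integral in H. destruct H as [H|H]; lra. }
  assert (Hprod : t1 * t2 = chord_factor p * chord_factor q).
  { apply (Rmult_eq_reg_l (1 + s * s)); auto. unfold vertex_poly in G1.
    replace (2 * s * (chord_factor p + chord_factor q) * t1) with (- ((1 + s * s) * (t1 + t2)) * t1) in G1
      by (rewrite Hsum; ring).
    lra. }
  assert (M : param_triangle p q t1 (circ_param t2)) by (rewrite E; right; right; reflexivity).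
  destruct M as [M|[M|M]]; apply circ_param_inj in M.
  - assert (t1 * t2 = - chord_factor q) by (rewrite M; field; auto). nra.
  - assert (t1 * t2 = - chord_factor p) by (rewrite M; field; auto). nra.
  - lra.
Qed.

Definition vertex_disc (p q s : R) : R :=
  s * s * (chord_factor p + chord_factor q) * (chord_factor p + chord_factor q)
  - (1 + s * s) * (1 + s * s) * chord_factor p * chord_factor q.

Lemma vertex_poly_complete_square p q s tau : (1 + s * s) * vertex_poly p q s tau =
  ((1 + s * s) * tau + s * (chord_factor p + chord_factor q))
  * ((1 + s * s) * tau + s * (chord_factor p + chord_factor q)) - vertex_disc p q s.
Proof. unfold vertex_poly, vertex_disc. ring. Qed.

Lemma vertex_poly_roots_neg p q s : vertex_disc p q s < 0 -> forall tau, vertex_poly p q s tau <> 0.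
Proof.
  intros HD tau E. pose proof (vertex_poly_complete_square p q s tau) as Sq. rewrite E in Sq.
  pose proof (Rle_0_sqr ((1 + s * s) * tau + s * (chord_factor p + chord_factor q))).
  unfold Rsqr in *. lra.
Qed.

Lemma vertex_poly_roots_zero p q s : vertex_disc p q s = 0 -> forall tau,
  vertex_poly p q s tau = 0 <-> tau = - (s * (chord_factor p + chord_factor q)) / (1 + s * s).
Proof.
  intros HD tau. pose proof (vertex_poly_complete_square p q s tau) as E. rewrite HD in E.
  pose proof (one_plus_sq_neq0 s). split; intro H1.
  - rewrite H1, Rmult_0_r in E.
    assert ((1 + s * s) * tau + s * (chord_factor p + chord_factor q) = 0) by nra.
    apply (Rmult_eq_reg_l (1 + s * s)); auto. field_simplify; auto. lra.
  - apply (Rmult_eq_reg_l (1 + s * s)); auto. rewrite E, H1. field. auto.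
Qed.

Lemma vertex_poly_roots_pos p q s : 0 < vertex_disc p q s -> forall tau,
  vertex_poly p q s tau = 0 <->
  tau = (- (s * (chord_factor p + chord_factor q)) + sqrt (vertex_disc p q s)) / (1 + s * s) \/
  tau = (- (s * (chord_factor p + chord_factor q)) - sqrt (vertex_disc p q s)) / (1 + s * s).
Proof.
  intros HD tau. pose proof (vertex_poly_complete_square p q s tau) as E.
  pose proof (one_plus_sq_neq0 s) as Hk.
  pose proof (sqrt_sqrt (vertex_disc p q s) (Rlt_le _ _ HD)) as Hs.
  set (r := sqrt (vertex_disc p q s)) in *.
  set (y := (1 + s * s) * tau + s * (chord_factor p + chord_factor q)) in *.
  assert (E2 : (1 + s * s) * vertex_poly p q s tau = (y - r) * (y + r)) by (rewrite E, <- Hs; ring).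
  split; intro H1.
  - rewrite H1, Rmult_0_r in E2. symmetry in E2. apply Rmult_integral in E2.
    destruct E2 as [E2|E2]; [left|right]; apply (Rmult_eq_reg_l (1 + s * s)); auto;
      field_simplify; auto; unfold y in E2; lra.
  - apply (Rmult_eq_reg_l (1 + s * s)); auto. rewrite Rmult_0_r, E2.
    destruct H1 as [H1|H1]; unfold y; rewrite H1; field_simplify; auto; lra.
Qed.

Lemma has_card_ext {T} (S1 S2 : T -> Prop) n : (forall x, S1 x <-> S2 x) ->
  has_card S2 n -> has_card S1 n.
Proof. intros H [f [Hi Hm]]. exists f. split; auto. intro x. rewrite H. apply Hm. Qed.

Section ParametrizedCard.
Variables (T : Type) (S : T -> Prop) (G : R -> Prop) (F : R -> T).
Hypothesis HS : forall X, S X <-> exists tau, G tau /\ X = F tau.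

Lemma has_card_param0 : (forall tau, ~ G tau) -> has_card S 0.
Proof.
  intro H. exists (fun _ => F 0). split; [intros i j Hi; lia|].
  intro x. split; [|intros [i [Hi _]]; lia].
  intro Sx. apply HS in Sx. destruct Sx as [tau [Gt _]]. exfalso; apply (H tau); auto.
Qed.

Lemma has_card_param1 t0 : (forall tau, G tau <-> tau = t0) -> has_card S 1.
Proof.
  intro H. exists (fun _ => F t0). split; [intros i j Hi Hj _; lia|].
  intro x. split.
  - intro Sx. apply HS in Sx. destruct Sx as [tau [Gt Ex]]. apply H in Gt. subst.
    exists 0%nat. split; auto.
  - intros [i [Hi Ex]]. apply HS. exists t0. split; auto. apply H; auto.
Qed.

Lemma has_card_param2 t1 t2 : (forall tau, G tau <-> tau = t1 \/ tau = t2) -> F t1 <> F t2 ->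
  has_card S 2.
Proof.
  intros H Hne. exists (fun i => if Nat.eqb i 0 then F t1 else F t2). split.
  - intros i j Hi Hj E.
    destruct i as [|[|i]], j as [|[|j]]; simpl in E; try lia; exfalso; apply Hne; congruence.
  - intro x. split.
    + intro Sx. apply HS in Sx. destruct Sx as [tau [Gt Ex]]. apply H in Gt.
      destruct Gt; subst; [exists 0%nat | exists 1%nat]; split; auto.
    + intros [i [Hi Ex]]. apply HS.
      destruct (Nat.eqb i 0); [exists t1 | exists t2]; split; auto; apply H; auto.
Qed.

End ParametrizedCard.

Lemma normal_count_disc p q s : -1 < p < 1 -> -1 < q < 1 -> p <> q ->
  (vertex_disc p q s < 0 -> has_card (circ_ideal (p, 0) (q, 0) (0, s)) 0) /\
  (vertex_disc p q s = 0 -> has_card (circ_ideal (p, 0) (q, 0) (0, s)) 1) /\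
  (0 < vertex_disc p q s -> has_card (circ_ideal (p, 0) (q, 0) (0, s)) 2).
Proof.
  intros Hp Hq Hpq.
  assert (HC : forall X, circ_ideal (p, 0) (q, 0) (0, s) X <->
                         exists tau, vertex_poly p q s tau = 0 /\ X = param_triangle p q tau).
  { intro X. split; [apply circ_ideal_normal_root; auto|].
    intros [tau [G ->]]. apply root_circ_ideal_normal; auto. }
  split; [|split]; intro HD.
  - apply (has_card_param0 _ _ (fun tau => vertex_poly p q s tau = 0) _ HC), vertex_poly_roots_neg; auto.
  - eapply (has_card_param1 _ _ (fun tau => vertex_poly p q s tau = 0) _ HC), vertex_poly_roots_zero; auto.
  - eapply (has_card_param2 _ _ (fun tau => vertex_poly p q s tau = 0) _ HC); [apply vertex_poly_roots_pos; auto|].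
    intro E. apply (param_triangle_inj_roots p q s) in E; auto; try (apply vertex_poly_roots_pos; auto).
    pose proof (sqrt_lt_R0 _ HD). pose proof (one_plus_sq_neq0 s).
    assert (0 < 1 + s * s) by nra.
    apply (Rmult_eq_compat_r (1 + s * s)) in E. field_simplify in E; lra.
Qed.

Lemma arccosh_ratio t : 0 <= t < 1 ->
  arccosh ((1 + t * t) / (1 - t * t)) = ln ((1 + t) / (1 - t)).
Proof.
  intro Ht. unfold arccosh. f_equal.
  assert (1 - t * t > 0) by nra.
  replace ((1 + t * t) / (1 - t * t) * ((1 + t * t) / (1 - t * t)) - 1)
    with ((2 * t / (1 - t * t)) * (2 * t / (1 - t * t))) by (field; lra).
  rewrite sqrt_square.
  - field. split; lra.
  - apply Rmult_le_pos; [lra|]. left; apply Rinv_0_lt_compat; lra.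
Qed.

Lemma Rabs_sq x : Rabs x * Rabs x = x * x.
Proof. rewrite <- Rabs_mult. apply Rabs_right, Rle_ge, Rle_0_sqr. Qed.

Lemma hdist_imag_origin s : -1 < s < 1 ->
  hdist (0, s) (0, 0) = ln ((1 + Rabs s) / (1 - Rabs s)).
Proof.
  intro Hs. unfold hdist. rewrite <- arccosh_ratio.
  - f_equal. unfold nrm2, psub, dot; simpl. rewrite Rabs_sq. field; repeat split; nra.
  - split; [apply Rabs_pos|]. apply Rabs_def1; lra.
Qed.

Lemma hDelta_real p q : -1 < p < 1 -> -1 < q < 1 -> p <> q ->
  hDelta (p, 0) (q, 0) = ln ((1 - p * q) / Rabs (p - q)).
Proof.
  intros Hp Hq Hpq.
  assert (Hpq1 : 1 - p * q > 0) by nra.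
  assert (Ha : 0 < Rabs (p - q)) by (apply Rabs_pos_lt; lra).
  assert (Hlt : Rabs (p - q) < 1 - p * q) by (apply Rabs_def1; nra).
  set (t := Rabs (p - q) / (1 - p * q)).
  assert (Ht : 0 < t < 1).
  { unfold t. split; [apply Rdiv_lt_0_compat; lra|].
    apply (Rmult_lt_reg_r (1 - p * q)); [lra|]. unfold Rdiv.
    rewrite Rmult_assoc, Rinv_l, Rmult_1_r, Rmult_1_l by lra. lra. }
  assert (Hd : hdist (p, 0) (q, 0) = ln ((1 + t) / (1 - t))).
  { unfold hdist. rewrite <- arccosh_ratio by lra. f_equal.
    unfold t, nrm2, psub, dot; simpl.
    replace (Rabs (p - q) / (1 - p * q) * (Rabs (p - q) / (1 - p * q)))
      with ((p - q) * (p - q) / ((1 - p * q) * (1 - p * q))) by (rewrite <- Rabs_sq; field; lra).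
    assert (0 < (1 - p * p) * (1 - q * q)) by (apply Rmult_gt_0_compat; nra).
    field. repeat split; nra. }
  unfold hDelta. rewrite Hd, exp_ln by (apply Rdiv_lt_0_compat; lra).
  f_equal. unfold t. field. repeat split; lra.
Qed.

Lemma ln_compare_sign (x y d : R) : 0 < x -> 0 < y -> (exists K, 0 < K /\ d = K * (x - y)) ->
  (ln x < ln y -> d < 0) /\ (ln x = ln y -> d = 0) /\ (ln y < ln x -> 0 < d).
Proof.
  intros Hx Hy [K [HK ->]]. split; [|split]; intro H.
  - apply ln_lt_inv in H; auto. nra.
  - apply ln_inv in H; auto. subst. ring.
  - apply ln_lt_inv in H; auto. nra.
Qed.

Lemma vertex_disc_factor p q s : -1 < p < 1 -> -1 < q < 1 -> -1 < s < 1 -> p <> q ->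
  exists K, 0 < K /\
  vertex_disc p q s = K * ((1 + Rabs s) / (1 - Rabs s) - (1 - p * q) / Rabs (p - q)).
Proof.
  intros Hp Hq Hs Hpq.
  set (sg := Rabs s).
  assert (Hsg : s * s = sg * sg) by (unfold sg; rewrite Rabs_sq; auto).
  assert (Hsg0 : 0 <= sg) by apply Rabs_pos.
  assert (Hsg1 : sg < 1) by (apply Rabs_def1; lra).
  set (x := (1 - p) / (1 + p)). set (y := (1 - q) / (1 + q)).
  assert (Hx : 0 < x) by (apply Rdiv_lt_0_compat; lra).
  assert (Hy : 0 < y) by (apply Rdiv_lt_0_compat; lra).
  assert (Hd : 0 < (1 + p) * (1 + q)) by nra.
  assert (Hxy : x - y = 2 * (q - p) / ((1 + p) * (1 + q))) by (unfold x, y; field; lra).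
  set (F2 := sg * (x * x + y * y) + (1 + sg * sg) * x * y).
  assert (HF2 : 0 < F2).
  { unfold F2. assert (0 < (1 + sg * sg) * x * y) by (apply Rmult_lt_0_compat; nra).
    assert (0 <= sg * (x * x + y * y)) by (apply Rmult_le_pos; nra). lra. }
  destruct (Rtotal_order p q) as [Lt|[Eq|Gt]]; [| contradiction |].
  - assert (Hxy' : y < x).
    { assert (0 < 2 * (q - p) / ((1 + p) * (1 + q))) by (apply Rdiv_lt_0_compat; lra). lra. }
    exists ((x - sg * y) * F2 / ((1 + p) * (1 + q)) * ((1 - sg) * (q - p))). split.
    + apply Rmult_lt_0_compat; [|nra]. apply Rdiv_lt_0_compat; auto.
      apply Rmult_lt_0_compat; auto. nra.
    + rewrite Rabs_left by lra. fold sg.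
      unfold vertex_disc, chord_factor. fold x y. rewrite Hsg. unfold F2, x, y. field. lra.
  - assert (Hxy' : x < y).
    { assert (0 < 2 * (p - q) / ((1 + p) * (1 + q))) by (apply Rdiv_lt_0_compat; lra). lra. }
    exists ((y - sg * x) * F2 / ((1 + p) * (1 + q)) * ((1 - sg) * (p - q))). split.
    + apply Rmult_lt_0_compat; [|nra]. apply Rdiv_lt_0_compat; auto.
      apply Rmult_lt_0_compat; auto. nra.
    + rewrite Rabs_right by lra. fold sg.
      unfold vertex_disc, chord_factor. fold x y. rewrite Hsg. unfold F2, x, y. field. lra.
Qed.

Lemma normal_count p q s : -1 < p < 1 -> -1 < q < 1 -> -1 < s < 1 -> p <> q ->
  let h := hdist (0, s) (0, 0) in
  (h < hDelta (p, 0) (q, 0) -> has_card (circ_ideal (p, 0) (q, 0) (0, s)) 0) /\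
  (h = hDelta (p, 0) (q, 0) -> has_card (circ_ideal (p, 0) (q, 0) (0, s)) 1) /\
  (hDelta (p, 0) (q, 0) < h -> has_card (circ_ideal (p, 0) (q, 0) (0, s)) 2).
Proof.
  intros Hp Hq Hs Hpq h.
  unfold h. rewrite hdist_imag_origin, hDelta_real by auto.
  assert (Hsg1 : Rabs s < 1) by (apply Rabs_def1; lra).
  assert (Hpos1 : 0 < (1 + Rabs s) / (1 - Rabs s))
    by (pose proof (Rabs_pos s); apply Rdiv_lt_0_compat; lra).
  assert (Hpos2 : 0 < (1 - p * q) / Rabs (p - q))
    by (apply Rdiv_lt_0_compat; [nra | apply Rabs_pos_lt; lra]).
  destruct (ln_compare_sign _ _ _ Hpos1 Hpos2 (vertex_disc_factor p q s Hp Hq Hs Hpq))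
    as [S0 [S1 S2]].
  destruct (normal_count_disc p q s Hp Hq Hpq) as [C0 [C1 C2]].
  split; [|split]; auto.
Qed.

Definition cmul (x y : pt) : pt :=
  (fst x * fst y - snd x * snd y, fst x * snd y + snd x * fst y).
Definition cconj (x : pt) : pt := (fst x, - snd x).

(* The Moebius map z |-> (z - a) / (1 - conj(a) z) of the disk; [mob_den a z]
   is its denominator and [mob_gcirc_A], [mob_gcirc_c] the coefficients of
   the image of the generalized circle [gcirc A c]. *)
Definition mob_den (a z : pt) : pt := (1 - dot a z, - det2 a z).
Definition mob (a z : pt) : pt :=
  cmul (psub z a) (fst (mob_den a z) / nrm2 (mob_den a z), - snd (mob_den a z) / nrm2 (mob_den a z)).
Definition mob_gcirc_A (a : pt) (A : R) (c : pt) : R := A * (1 + nrm2 a) - 2 * dot a c.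
Definition mob_gcirc_c (a : pt) (A : R) (c : pt) : pt :=
  (fst c + fst (cmul (cconj c) (cmul a a)) - 2 * A * fst a,
   snd c + snd (cmul (cconj c) (cmul a a)) - 2 * A * snd a).

Lemma mob_den_pos a z : in_disk a -> nrm2 z <= 1 -> 0 < nrm2 (mob_den a z).
Proof.
  unfold in_disk, mob_den, nrm2, dot, det2. destruct a as [a1 a2], z as [z1 z2]; simpl.
  intros Ha Hz.
  destruct (Rle_lt_dec ((1 - (a1 * z1 + a2 * z2)) * (1 - (a1 * z1 + a2 * z2)) +
     - (a1 * z2 - a2 * z1) * - (a1 * z2 - a2 * z1)) 0) as [H|H]; auto.
  exfalso. apply sum_sq_le0 in H. destruct H as [H1 H2].
  (* |conj(a) z| = 1 is impossible for |a| < 1, |z| <= 1 *)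
  assert (E : (a1 * z1 + a2 * z2) * (a1 * z1 + a2 * z2) + (a1 * z2 - a2 * z1) * (a1 * z2 - a2 * z1)
              = (a1 * a1 + a2 * a2) * (z1 * z1 + z2 * z2)) by ring.
  replace (a1 * z1 + a2 * z2) with 1 in E by lra.
  replace (a1 * z2 - a2 * z1) with 0 in E by lra.
  assert (0 <= a1 * a1 + a2 * a2) by nra.
  nra.
Qed.

Lemma mob_one_sub_nrm2 a z : in_disk a -> nrm2 z <= 1 ->
  1 - nrm2 (mob a z) = (1 - nrm2 a) * (1 - nrm2 z) / nrm2 (mob_den a z).
Proof.
  intros Ha Hz. pose proof (mob_den_pos a z Ha Hz) as Hd.
  unfold mob, cmul, psub, mob_den, nrm2, dot, det2 in *.
  destruct a as [a1 a2], z as [z1 z2]; simpl in *. field. lra.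
Qed.

Lemma mob_dist2 a z w : in_disk a -> nrm2 z <= 1 -> nrm2 w <= 1 ->
  nrm2 (psub (mob a z) (mob a w)) =
  (1 - nrm2 a) * (1 - nrm2 a) * nrm2 (psub z w) / (nrm2 (mob_den a z) * nrm2 (mob_den a w)).
Proof.
  intros Ha Hz Hw. pose proof (mob_den_pos a z Ha Hz). pose proof (mob_den_pos a w Ha Hw).
  unfold mob, cmul, psub, mob_den, nrm2, dot, det2 in *.
  destruct a as [a1 a2], z as [z1 z2], w as [w1 w2]; simpl in *. field. lra.
Qed.

Lemma mob_hdist a z w : in_disk a -> in_disk z -> in_disk w ->
  hdist (mob a z) (mob a w) = hdist z w.
Proof.
  intros Ha Hz Hw. unfold hdist. f_equal.
  assert (Hz1 : nrm2 z <= 1) by (unfold in_disk in Hz; lra).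
  assert (Hw1 : nrm2 w <= 1) by (unfold in_disk in Hw; lra).
  rewrite (mob_dist2 a z w), !mob_one_sub_nrm2 by auto.
  pose proof (mob_den_pos a z Ha Hz1). pose proof (mob_den_pos a w Ha Hw1).
  unfold in_disk in *. field. repeat split; lra.
Qed.

Lemma mob_gcirc_eq a A c z : in_disk a -> nrm2 z <= 1 ->
  mob_gcirc_A a A c * (nrm2 (mob a z) + 1) - 2 * dot (mob_gcirc_c a A c) (mob a z) =
  (1 - nrm2 a) * (1 - nrm2 a) / nrm2 (mob_den a z) * (A * (nrm2 z + 1) - 2 * dot c z).
Proof.
  intros Ha Hz. pose proof (mob_den_pos a z Ha Hz).
  unfold mob_gcirc_A, mob_gcirc_c, mob, cmul, cconj, psub, mob_den, nrm2, dot, det2 in *.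
  destruct a as [a1 a2], z as [z1 z2], c as [c1 c2]; simpl in *. field. lra.
Qed.

Lemma mob_gcirc a A c z : in_disk a -> nrm2 z <= 1 ->
  (gcirc A c z <-> gcirc (mob_gcirc_A a A c) (mob_gcirc_c a A c) (mob a z)).
Proof.
  intros Ha Hz. pose proof (mob_gcirc_eq a A c z Ha Hz) as E.
  assert (Hk : 0 < (1 - nrm2 a) * (1 - nrm2 a) / nrm2 (mob_den a z)).
  { unfold in_disk in Ha. apply Rdiv_lt_0_compat; [nra | apply mob_den_pos; auto]. }
  unfold gcirc. split; intro H.
  - rewrite H, Rminus_diag, Rmult_0_r in E. lra.
  - assert (X : (1 - nrm2 a) * (1 - nrm2 a) / nrm2 (mob_den a z) * (A * (nrm2 z + 1) - 2 * dot c z) = 0)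
      by lra.
    apply Rmult_integral in X. destruct X; lra.
Qed.

Lemma mob_gcirc_nondeg a A c : in_disk a -> gcirc_nondeg A c ->
  gcirc_nondeg (mob_gcirc_A a A c) (mob_gcirc_c a A c).
Proof.
  unfold gcirc_nondeg, in_disk. intros Ha H.
  assert (E : nrm2 (mob_gcirc_c a A c) - mob_gcirc_A a A c * mob_gcirc_A a A c =
              (1 - nrm2 a) * (1 - nrm2 a) * (nrm2 c - A * A)).
  { unfold mob_gcirc_A, mob_gcirc_c, cmul, cconj, nrm2, dot.
    destruct a as [a1 a2], c as [c1 c2]; simpl. ring. }
  assert (0 < (1 - nrm2 a) * (1 - nrm2 a) * (nrm2 c - A * A)) by (apply Rmult_lt_0_compat; nra).
  lra.
Qed.

(* A generalized circle through a is sent by [mob a] to a line through 0. *)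
Lemma mob_gcirc_at a A c : gcirc A c a ->
  mob_gcirc_A a A c = 0 /\
  mob_gcirc_c a A c = (- (1 - nrm2 a) * fst (gcirc_normal A c a),
                       - (1 - nrm2 a) * snd (gcirc_normal A c a)).
Proof.
  unfold gcirc. intro H. split.
  - unfold mob_gcirc_A. rewrite Rplus_comm. unfold dot in *. destruct a, c; simpl in *. lra.
  - apply pt_eq.
    + apply (eq_by_combination1 _ _ _ _ (- fst a) H).
      unfold mob_gcirc_c, gcirc_normal, cmul, cconj, nrm2, dot; simpl. ring.
    + apply (eq_by_combination1 _ _ _ _ (- snd a) H).
      unfold mob_gcirc_c, gcirc_normal, cmul, cconj, nrm2, dot; simpl. ring.
Qed.

Lemma mob_self a : mob a a = (0, 0).
Proof. unfold mob, cmul, psub. apply pt_eq; simpl; ring. Qed.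

Lemma mob_inv a z : in_disk a -> nrm2 z <= 1 -> mob (- fst a, - snd a) (mob a z) = z.
Proof.
  intros Ha Hz. pose proof (mob_den_pos a z Ha Hz) as Hd.
  unfold in_disk, mob, cmul, psub, mob_den, nrm2, dot, det2 in *.
  destruct a as [a1 a2], z as [z1 z2]; simpl in *.
  assert (Hk : 0 < (1 - (a1 * a1 + a2 * a2)) * (1 - (a1 * a1 + a2 * a2))) by nra.
  apply pt_eq; simpl; field; (split; [lra|]);
  match goal with |- ?X <> 0 =>
    replace X with (((1 - (a1 * z1 + a2 * z2)) * (1 - (a1 * z1 + a2 * z2)) +
     - (a1 * z2 - a2 * z1) * - (a1 * z2 - a2 * z1)) *
     ((1 - (a1 * a1 + a2 * a2)) * (1 - (a1 * a1 + a2 * a2)))) by ring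
  end; apply Rgt_not_eq, Rmult_lt_0_compat; lra.
Qed.

(* The rotation z |-> conj(e) z, for e on S^1. *)
Definition rot (e z : pt) : pt := (dot e z, det2 e z).

Lemma rot_nrm2 e z : on_S1 e -> nrm2 (rot e z) = nrm2 z.
Proof.
  unfold on_S1. intro He. apply (eq_by_combination1 _ _ _ _ (nrm2 z) He).
  unfold rot, nrm2, dot, det2; simpl. ring.
Qed.

Lemma rot_dot e c z : on_S1 e -> dot (rot e c) (rot e z) = dot c z.
Proof.
  unfold on_S1. intro He. apply (eq_by_combination1 _ _ _ _ (dot c z) He).
  unfold rot, nrm2, dot, det2; simpl. ring.
Qed.

Lemma rot_psub e z w : psub (rot e z) (rot e w) = rot e (psub z w).
Proof. unfold rot, psub, dot, det2. apply pt_eq; simpl; ring. Qed.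

Lemma rot_inv e z : on_S1 e -> rot (cconj e) (rot e z) = z.
Proof.
  unfold on_S1. intro He. apply pt_eq.
  - apply (eq_by_combination1 _ _ _ _ (fst z) He). unfold rot, cconj, nrm2, dot, det2; simpl. ring.
  - apply (eq_by_combination1 _ _ _ _ (snd z) He). unfold rot, cconj, nrm2, dot, det2; simpl. ring.
Qed.

Lemma cconj_S1 e : on_S1 e -> on_S1 (cconj e).
Proof. unfold on_S1, cconj, nrm2, dot; simpl. intro. lra. Qed.

(* The properties of the disk automorphisms [mob a] and [rot e] that the
   count depends on, stated on the closed disk. *)
Record disk_isometry (f : pt -> pt) : Prop := {
  iso_defect : forall z, nrm2 z <= 1 ->
    exists k, 0 < k /\ 1 - nrm2 (f z) = k * (1 - nrm2 z);
  iso_gcirc : forall A c, gcirc_nondeg A c -> exists A' c', gcirc_nondeg A' c' /\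
    forall z, nrm2 z <= 1 -> (gcirc A c z <-> gcirc A' c' (f z));
  iso_hdist : forall z w, in_disk z -> in_disk w -> hdist (f z) (f w) = hdist z w }.

Section DiskIsometry.
Variable f : pt -> pt.
Hypothesis Hf : disk_isometry f.

Lemma iso_hDelta P Q : in_disk P -> in_disk Q -> hDelta (f P) (f Q) = hDelta P Q.
Proof. intros HP HQ. unfold hDelta. rewrite iso_hdist; auto. Qed.

Lemma iso_closed_disk z : nrm2 z <= 1 -> nrm2 (f z) <= 1.
Proof.
  intro Hz. destruct (iso_defect f Hf z Hz) as [k [Hk E]].
  assert (0 <= k * (1 - nrm2 z)) by (apply Rmult_le_pos; lra). lra.
Qed.

Lemma iso_in_disk z : nrm2 z <= 1 -> (in_disk (f z) <-> in_disk z).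
Proof.
  intro Hz. destruct (iso_defect f Hf z Hz) as [k [Hk E]]. unfold in_disk.
  split; intro H; nra.
Qed.

Lemma iso_S1 z : nrm2 z <= 1 -> (on_S1 (f z) <-> on_S1 z).
Proof.
  intro Hz. destruct (iso_defect f Hf z Hz) as [k [Hk E]]. unfold on_S1.
  split; intro H; rewrite H in E.
  - assert (k * (1 - nrm2 z) = 0) by lra.
    apply Rmult_integral in H0. destruct H0; lra.
  - lra.
Qed.

Lemma iso_ideal_line u v z :
  (forall x y, nrm2 x <= 1 -> nrm2 y <= 1 -> f x = f y -> x = y) ->
  on_S1 u -> on_S1 v -> u <> v -> in_disk z ->
  (ideal_line u v z <-> ideal_line (f u) (f v) (f z)).
Proof.
  intros Hinj Hu Hv Hne Hz.
  assert (Hu1 : nrm2 u <= 1) by (unfold on_S1 in Hu; lra).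
  assert (Hv1 : nrm2 v <= 1) by (unfold on_S1 in Hv; lra).
  assert (Hz1 : nrm2 z <= 1) by (unfold in_disk in Hz; lra).
  destruct (iso_gcirc f Hf _ _ (ideal_line_nondeg u v Hu Hv Hne)) as [A' [c' [Hn' H']]].
  unfold ideal_line at 1. rewrite H' by auto.
  apply (gcirc_ideal_line A' c' (f u) (f v) Hn').
  - apply iso_S1; auto.
  - apply iso_S1; auto.
  - intro E. apply Hne, Hinj; auto.
  - apply H'; auto. apply ideal_line_l; auto.
  - apply H'; auto. apply ideal_line_r; auto.
Qed.

End DiskIsometry.

Lemma iso_comp f g : disk_isometry f -> disk_isometry g -> disk_isometry (fun z => g (f z)).
Proof.
  intros Hf Hg. split.
  - intros z Hz. destruct (iso_defect f Hf z Hz) as [k1 [Hk1 E1]].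
    destruct (iso_defect g Hg (f z) (iso_closed_disk f Hf z Hz)) as [k2 [Hk2 E2]].
    exists (k2 * k1). split; [apply Rmult_lt_0_compat; auto|]. rewrite E2, E1. ring.
  - intros A c Hn. destruct (iso_gcirc f Hf A c Hn) as [A1 [c1 [Hn1 H1]]].
    destruct (iso_gcirc g Hg A1 c1 Hn1) as [A2 [c2 [Hn2 H2]]].
    exists A2, c2. split; auto. intros z Hz. rewrite H1 by auto.
    apply H2, iso_closed_disk; auto.
  - intros z w Hz Hw.
    assert (Hz1 : nrm2 z <= 1) by (unfold in_disk in Hz; lra).
    assert (Hw1 : nrm2 w <= 1) by (unfold in_disk in Hw; lra).
    rewrite (iso_hdist g Hg) by (apply iso_in_disk; auto).
    apply iso_hdist; auto.
Qed.

Lemma rot_isometry e : on_S1 e -> disk_isometry (rot e).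
Proof.
  intro He. split.
  - intros z Hz. exists 1. split; [lra|]. rewrite rot_nrm2; auto. ring.
  - intros A c Hn. exists A, (rot e c). split.
    + unfold gcirc_nondeg in *. rewrite rot_nrm2; auto.
    + intros z Hz. unfold gcirc. rewrite rot_nrm2, rot_dot; auto. tauto.
  - intros z w Hz Hw. unfold hdist. rewrite rot_psub, !rot_nrm2; auto.
Qed.

Lemma mob_isometry a : in_disk a -> disk_isometry (mob a).
Proof.
  intro Ha. split.
  - intros z Hz. exists ((1 - nrm2 a) / nrm2 (mob_den a z)). split.
    + unfold in_disk in Ha. apply Rdiv_lt_0_compat; [lra | apply mob_den_pos; auto].
    + rewrite mob_one_sub_nrm2 by auto. unfold Rdiv. ring.
  - intros A c Hn. exists (mob_gcirc_A a A c), (mob_gcirc_c a A c). split.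
    + apply mob_gcirc_nondeg; auto.
    + intros z Hz. apply mob_gcirc; auto.
  - intros z w Hz Hw. apply mob_hdist; auto.
Qed.

Definition image (f : pt -> pt) (X : pt -> Prop) : pt -> Prop := fun y => exists z, X z /\ y = f z.

Lemma image_vertices f a b c : image f (fun z => z = a \/ z = b \/ z = c) =
  (fun y => y = f a \/ y = f b \/ y = f c).
Proof.
  apply functional_extensionality. intro y. apply propositional_extensionality.
  unfold image. split.
  - intros [z [Hz Ey]]. subst. destruct Hz as [E|[E|E]]; subst; auto.
  - intros [E|[E|E]]; subst; eauto.
Qed.

Lemma has_card_bij {T U} (S1 : T -> Prop) (S2 : U -> Prop) (Phi : U -> T) (Psi : T -> U) n :
  (forall Y, S2 Y -> S1 (Phi Y)) -> (forall X, S1 X -> S2 (Psi X)) ->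
  (forall Y, S2 Y -> Psi (Phi Y) = Y) -> (forall X, S1 X -> Phi (Psi X) = X) ->
  has_card S2 n -> has_card S1 n.
Proof.
  intros H1 H2 H3 H4 [f [Hi Hm]]. exists (fun i => Phi (f i)). split.
  - intros i j Hin Hjn E. apply Hi; auto.
    rewrite <- (H3 (f i)), <- (H3 (f j)), E; auto; apply Hm; eauto.
  - intro X. split.
    + intro HX. destruct (proj1 (Hm (Psi X)) (H2 X HX)) as [i [Hin Ei]].
      exists i. split; auto. rewrite Ei. auto.
    + intros [i [Hin Ei]]. subst. apply H1, Hm. eauto.
Qed.

Section Transport.
Variables f g : pt -> pt.
Hypothesis Hf : disk_isometry f.
Hypothesis Hgf : forall z, nrm2 z <= 1 -> g (f z) = z.

Lemma iso_circ_ideal P Q R0 X : in_disk P -> in_disk Q -> in_disk R0 ->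
  circ_ideal P Q R0 X -> circ_ideal (f P) (f Q) (f R0) (image f X).
Proof.
  intros HP HQ HR [a [b [c [Ha [Hb [Hc [Hab [Hbc [Hca [HX [G1 [G2 G3]]]]]]]]]]]].
  assert (Inj : forall x y, nrm2 x <= 1 -> nrm2 y <= 1 -> f x = f y -> x = y).
  { intros x y Hx Hy E. rewrite <- (Hgf x Hx), <- (Hgf y Hy), E. auto. }
  assert (S1le : forall x, on_S1 x -> nrm2 x <= 1) by (unfold on_S1; intros; lra).
  exists (f a), (f b), (f c). subst X. rewrite image_vertices.
  repeat split; auto; try (apply iso_S1; auto);
    try (intro E; apply Inj in E; auto); apply iso_ideal_line; auto.
Qed.

Lemma image_inv X : (forall z, X z -> nrm2 z <= 1) -> image g (image f X) = X.
Proof.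
  intro HX. apply functional_extensionality. intro y. apply propositional_extensionality.
  unfold image. split.
  - intros [w [[z [Hz ->]] ->]]. rewrite Hgf; auto.
  - intro Hy. exists (f y). split; [exists y; auto|]. rewrite Hgf; auto.
Qed.

End Transport.

Lemma circ_ideal_vertices_closed P Q R0 X : circ_ideal P Q R0 X -> forall z, X z -> nrm2 z <= 1.
Proof.
  intros [a [b [c [Ha [Hb [Hc [_ [_ [_ [-> _]]]]]]]]]] z Hz.
  unfold on_S1 in *. destruct Hz as [E|[E|E]]; subst; lra.
Qed.

Lemma iso_circ_ideal_card f g P Q R0 n : disk_isometry f -> disk_isometry g ->
  (forall z, nrm2 z <= 1 -> g (f z) = z) -> (forall w, nrm2 w <= 1 -> f (g w) = w) ->
  in_disk P -> in_disk Q -> in_disk R0 ->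
  has_card (circ_ideal (f P) (f Q) (f R0)) n -> has_card (circ_ideal P Q R0) n.
Proof.
  intros Hf Hg Hgf Hfg HP HQ HR.
  assert (Dle : forall x, in_disk x -> nrm2 x <= 1) by (unfold in_disk; intros; lra).
  apply (has_card_bij _ _ (image g) (image f)).
  - intros Y HY. rewrite <- (Hgf P), <- (Hgf Q), <- (Hgf R0) by auto.
    apply (iso_circ_ideal g f Hg Hfg); auto; apply iso_in_disk; auto.
  - intros X HX. apply (iso_circ_ideal f g Hf Hgf); auto.
  - intros Y HY. apply (image_inv g f Hfg). eapply circ_ideal_vertices_closed; eauto.
  - intros X HX. apply (image_inv f g Hgf). eapply circ_ideal_vertices_closed; eauto.
Qed.

Lemma mob_gcirc_through a A c : in_disk a -> gcirc_nondeg A c -> gcirc A c a ->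
  0 < nrm2 (gcirc_normal A c a) /\
  forall z, nrm2 z <= 1 -> (gcirc A c z <-> dot (gcirc_normal A c a) (mob a z) = 0).
Proof.
  intros Ha Hn Hga.
  set (n := gcirc_normal A c a). set (k := 1 - nrm2 a).
  assert (Hk : 0 < k) by (unfold k, in_disk in *; lra).
  destruct (mob_gcirc_at a A c Hga) as [EA Ec].
  pose proof (mob_gcirc_nondeg a A c Ha Hn) as Hn'.
  rewrite EA, Ec in Hn'. fold n k in Hn'. split.
  - unfold gcirc_nondeg, nrm2, dot in Hn' |- *. cbn [fst snd] in Hn'. nra.
  - intros z Hz. rewrite (mob_gcirc a A c z Ha Hz), EA, Ec. fold n k.
    unfold gcirc, dot. cbn [fst snd].
    split; intro H.
    + assert (k * (fst n * fst (mob a z) + snd n * snd (mob a z)) = 0) by lra.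
      apply Rmult_integral in H0. destruct H0; lra.
    + replace (- k * fst n * fst (mob a z) + - k * snd n * snd (mob a z))
        with (- k * (fst n * fst (mob a z) + snd n * snd (mob a z))) by ring.
      rewrite H. ring.
Qed.

Lemma perp_det0 (n1 n2 x : pt) : dot n1 n2 = 0 -> dot n2 x = 0 -> 0 < nrm2 n2 -> det2 n1 x = 0.
Proof.
  unfold nrm2, dot, det2. destruct n1 as [a1 a2], n2 as [b1 b2], x as [x1 x2]; simpl.
  intros H1 H2 H3.
  assert (E1 : b1 * (a1 * x2 - a2 * x1) = 0).
  { apply (eq_by_combination2 _ _ _ _ _ _ x2 (- a2) H1 H2). ring. }
  assert (E2 : b2 * (a1 * x2 - a2 * x1) = 0).
  { apply (eq_by_combination2 _ _ _ _ _ _ (- x1) a1 H1 H2). ring. }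
  destruct (Req_dec b1 0) as [Z1|Z1].
  - destruct (Req_dec b2 0) as [Z2|Z2].
    + rewrite Z1, Z2 in H3. lra.
    + apply Rmult_integral in E2. destruct E2; [contradiction | auto].
  - apply Rmult_integral in E1. destruct E1; [contradiction | auto].
Qed.

Definition normalizer (a e z : pt) : pt := rot e (mob a z).
Definition normalizer_inv (a e w : pt) : pt := mob (- fst a, - snd a) (rot (cconj e) w).

Lemma normalizer_isometry a e : in_disk a -> on_S1 e ->
  disk_isometry (normalizer a e) /\ disk_isometry (normalizer_inv a e) /\
  (forall z, nrm2 z <= 1 -> normalizer_inv a e (normalizer a e z) = z) /\
  (forall w, nrm2 w <= 1 -> normalizer a e (normalizer_inv a e w) = w).
Proof.
  intros Ha He.
  assert (Ha' : in_disk (- fst a, - snd a)) by (unfold in_disk, nrm2, dot in *; simpl; lra).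
  assert (Hinv : forall z, nrm2 z <= 1 -> mob a (mob (- fst a, - snd a) z) = z).
  { intros z Hz. pose proof (mob_inv _ z Ha' Hz) as H.
    replace (- fst (- fst a, - snd a), - snd (- fst a, - snd a)) with a in H
      by (apply pt_eq; simpl; ring).
    exact H. }
  unfold normalizer, normalizer_inv. split; [|split; [|split]].
  - apply (iso_comp (mob a) (rot e)); [apply mob_isometry | apply rot_isometry]; auto.
  - apply (iso_comp (rot (cconj e)) (mob (- fst a, - snd a)));
      [apply rot_isometry, cconj_S1 | apply mob_isometry]; auto.
  - intros z Hz. rewrite rot_inv by auto. apply mob_inv; auto.
  - intros w Hw. rewrite Hinv.
    + replace e with (cconj (cconj e)) at 1 by (unfold cconj; apply pt_eq; simpl; ring).
      apply rot_inv, cconj_S1; auto.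
    + rewrite rot_nrm2; auto. apply cconj_S1; auto.
Qed.

Lemma normalize_orth_pair L1 L2 F : hl_ok L1 -> hl_ok L2 -> orth_at L1 L2 F ->
  exists e, on_S1 e /\
    (forall z, on_hl L1 z -> snd (normalizer F e z) = 0) /\
    (forall z, on_hl L2 z -> fst (normalizer F e z) = 0).
Proof.
  intros Hok1 Hok2 [[HF E1F] [[_ E2F] Hdot]].
  destruct (hl_gcirc L1 Hok1) as [N1 E1]. destruct (hl_gcirc L2 Hok2) as [N2 E2].
  apply hl_normal_gcirc in Hdot.
  destruct (mob_gcirc_through F _ _ HF N1 (proj1 (E1 F) E1F)) as [Pn1 T1].
  destruct (mob_gcirc_through F _ _ HF N2 (proj1 (E2 F) E2F)) as [Pn2 T2].
  set (n1 := gcirc_normal (hl_A L1) (hl_c L1) F) in *.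
  set (n2 := gcirc_normal (hl_A L2) (hl_c L2) F) in *.
  assert (Dle : forall z, on_hl L1 z \/ on_hl L2 z -> nrm2 z <= 1)
    by (intros z [[Hz _]|[Hz _]]; unfold in_disk in Hz; lra).
  set (l := sqrt (nrm2 n1)).
  assert (Hl : 0 < l) by (apply sqrt_lt_R0; auto).
  assert (Hl2 : l * l = nrm2 n1) by (apply sqrt_sqrt; lra).
  (* e is the unit vector along L1 at F, i.e. n1 turned by a right angle *)
  set (e := (- snd n1 / l, fst n1 / l)).
  assert (Hdet : forall x, det2 e x = - dot n1 x / l)
    by (intro x; unfold e, det2, dot; simpl; field; lra).
  assert (Hdot' : forall x, dot e x = det2 n1 x / l)
    by (intro x; unfold e, det2, dot; simpl; field; lra).
  exists e. split; [|split].
  - unfold on_S1. replace 1 with (nrm2 n1 / (l * l)) by (rewrite Hl2; field; lra).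
    unfold e, nrm2, dot; simpl. field. lra.
  - intros z Hz. unfold normalizer, rot. cbn [snd]. rewrite Hdet.
    assert (D : dot n1 (mob F z) = 0) by (apply T1; [apply Dle; auto | apply E1, Hz]).
    rewrite D. unfold Rdiv. ring.
  - intros z Hz. unfold normalizer, rot. cbn [fst]. rewrite Hdot'.
    rewrite (perp_det0 n1 n2 (mob F z)); auto.
    + unfold Rdiv. ring.
    + apply T2; auto. apply E2, Hz.
Qed.

Lemma collinear_of_image f g P Q R0 : disk_isometry f -> disk_isometry g ->
  (forall z, nrm2 z <= 1 -> g (f z) = z) -> in_disk P -> in_disk Q -> in_disk R0 ->
  (exists A c, gcirc_nondeg A c /\ gcirc A c (f P) /\ gcirc A c (f Q) /\ gcirc A c (f R0)) ->
  exists L, hl_ok L /\ on_hl L P /\ on_hl L Q /\ on_hl L R0.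
Proof.
  intros Hf Hg Hgf HP HQ HR [A [c [Hn [GP [GQ GR]]]]].
  assert (Dle : forall x, in_disk x -> nrm2 (f x) <= 1)
    by (intros x Hx; apply iso_closed_disk; auto; unfold in_disk in Hx; lra).
  destruct (iso_gcirc g Hg A c Hn) as [A' [c' [Hn' HG]]].
  destruct (gcirc_hl A' c' Hn') as [L [HL HLe]].
  assert (Back : forall x, in_disk x -> gcirc A c (f x) -> on_hl L x).
  { intros x Hx Gx. split; auto. apply HLe.
    rewrite <- (Hgf x) by (unfold in_disk in Hx; lra). apply HG; auto. }
  exists L. split; [|split; [|split]]; auto.
Qed.

Lemma normal_collinear p s : -1 < p < 1 ->
  exists A c, gcirc_nondeg A c /\ gcirc A c (p, 0) /\ gcirc A c (0, s).
Proof.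
  intro Hp. unfold gcirc_nondeg, gcirc, nrm2, dot.
  destruct (Req_dec s 0) as [->|Hs].
  - exists 0, (0, 1). simpl. repeat split; try ring. lra.
  - exists (2 * p * s), (s * (p * p + 1), p * (s * s + 1)). simpl. repeat split; try ring.
    assert (H1 : 0 < s * s * ((1 - p * p) * (1 - p * p)))
      by (apply Rmult_lt_0_compat; [| assert (1 - p * p > 0) by nra]; nra).
    pose proof (Rle_0_sqr (p * (s * s + 1))). unfold Rsqr in *. nra.
Qed.


Theorem theorem2p1 (P Q R0 : pt) (LPQ LRF : hline) (F : pt) (h : R) :
  in_disk P -> in_disk Q -> in_disk R0 ->
  ~ (exists L, hl_ok L /\ on_hl L P /\ on_hl L Q /\ on_hl L R0) ->
  (* LPQ is the hyperbolic line through P and Q *)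
  hl_ok LPQ -> on_hl LPQ P -> on_hl LPQ Q ->
  (* LRF is the geodesic from R0 perpendicular to LPQ, with foot F *)
  hl_ok LRF -> on_hl LRF R0 -> orth_at LPQ LRF F ->
  h = hdist R0 F ->
  (h < hDelta P Q -> has_card (circumscribing P Q R0) 0) /\
  (h = hDelta P Q -> has_card (circumscribing P Q R0) 1) /\
  (hDelta P Q < h -> has_card (circumscribing P Q R0) 2).
Proof.
  intros HP HQ HR Hnc Hok1 HonP HonQ Hok2 HonR Horth ->.
  assert (HF : in_disk F) by (destruct Horth as [[HF _] _]; exact HF).
  destruct (normalize_orth_pair LPQ LRF F Hok1 Hok2 Horth) as [e [He [Hreal Himag]]].
  destruct (normalizer_isometry F e HF He) as [HT [HTi [Hl Hr]]].
  set (T := normalizer F e) in *.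
  set (p := fst (T P)). set (q := fst (T Q)). set (s := snd (T R0)).
  assert (TP : T P = (p, 0)) by (apply pt_eq; [reflexivity | apply Hreal; auto]).
  assert (TQ : T Q = (q, 0)) by (apply pt_eq; [reflexivity | apply Hreal; auto]).
  assert (TR : T R0 = (0, s)) by (apply pt_eq; [apply Himag; auto | reflexivity]).
  assert (TF : T F = (0, 0)) by (unfold T, normalizer; rewrite mob_self; unfold rot, dot, det2; apply pt_eq; simpl; ring).
  assert (Dle : forall x, in_disk x -> nrm2 x <= 1) by (unfold in_disk; intros; lra).
  assert (Hp : -1 < p < 1) by (apply in_disk_real; rewrite <- TP; apply iso_in_disk; auto).
  assert (Hq : -1 < q < 1) by (apply in_disk_real; rewrite <- TQ; apply iso_in_disk; auto).
  assert (Hs : -1 < s < 1) by (apply in_disk_imag; rewrite <- TR; apply iso_in_disk; auto).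
  assert (Hpq : p <> q).
  { intro E. apply Hnc, (collinear_of_image T (normalizer_inv F e)); auto.
    destruct (normal_collinear (p) (s) Hp) as [A [c [Hn [G1 G2]]]].
    exists A, c. rewrite TP, TQ, TR, <- E. auto. }
  rewrite <- (iso_hdist T HT R0 F), <- (iso_hDelta T HT P Q), TP, TQ, TR, TF by auto.
  destruct (normal_count _ _ _ Hp Hq Hs Hpq) as [C0 [C1 C2]].
  assert (Back : forall n, has_card (circ_ideal (T P) (T Q) (T R0)) n ->
                           has_card (circumscribing P Q R0) n).
  { intros n Hn. apply (has_card_ext _ _ _ (fun X => circumscribing_ideal P Q R0 X HP HQ HR)).
    apply (iso_circ_ideal_card T (normalizer_inv F e)); auto. }
  rewrite TP, TQ, TR in Back. split; [|split]; auto.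
Qed.
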